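(* Let $X$ be countable, $K:X\times X\to\mathbb{C}$ positive definite with $\delta_x\in\mathscr{H}(K)$ for all $x\in X$, and let $F_1\subset F_2\subset\cdots$ be finite subsets with $\bigcup_iF_i=X$. Then a function $h$ on $X$ belongs to $\mathscr{H}(K)$ if and only if $\sup_i\|K_{F_i}^{-1/2}h|_{F_i}\|_{\ell^2(F_i)}<\infty$. Moreover, for $h\in\mathscr{H}(K)$, $\|h\|^2_{\mathscr{H}(K)}=\lim_{i\to\infty}\|K_{F_i}^{-1/2}h|_{F_i}\|^2_{\ell^2(F_i)}$, where the sequence $\|K_{F_i}^{-1/2}h|_{F_i}\|^2_{\ell^2(F_i)}$ is monotone nondecreasing.
   Context: $\delta_x$ is the function on $X$ equal to $1$ at $x$ and $0$ elsewhere; $\mathscr{H}(K)$ is the reproducing kernel Hilbert space of $K$ (completion of span of $K(\cdot,x)$, $\langle K(\cdot,x),K(\cdot,y)\rangle=K(x,y)$, $\langle K(\cdot,x),h\rangle=h(x)$). $K_F=(K(x,y))_{x,y\in F}$ for finite $F$; under the assumption it is positive and invertible, and $K_F^{-1/2}$ is defined by the spectral theorem. *)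

From HB Require Import structures.
From Stdlib Require Import ClassicalEpsilon.
From mathcomp Require Import all_boot all_order all_algebra.
From mathcomp Require Import finmap.
From mathcomp Require Import complex.
From mathcomp Require Import all_classical all_reals topology normedtype sequences.
Set Implicit Arguments. Unset Strict Implicit. Unset Printing Implicit Defensive.
Import Order.TTheory GRing.Theory Num.Theory.
Import numFieldNormedType.Exports.
Local Open Scope ring_scope.
Local Open Scope classical_set_scope.
Local Open Scope ring_scope.
Local Open Scope complex_scope.

Section RKHS.
Variable R : realType.
Variable X : choiceType.
Notation C := R[i].
Variable K : X -> X -> C.

(** Positive definite kernel (in the sense of the paper: positive
    semidefinite Gram matrices): for all finite families of points and
    coefficients, sum_{i,j} conj(c_i) c_j K(x_i,x_j) >= 0. *)
Definition pos_def_kernel : Prop :=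
  forall (n : nat) (x : 'I_n -> X) (c : 'I_n -> C),
    0 <= \sum_(i < n) \sum_(j < n) (c i)^* * c j * K (x i) (x j).

(** Elements of span{K(.,x)} : finite lists of (point, coefficient),
    representing  sum_p p.2 K(.,p.1). *)
Definition span_elt := seq (X * C).

Definition span_eval (s : span_elt) (z : X) : C :=
  \sum_(p <- s) p.2 * K z p.1.

(** ||s||^2 in the pre-Hilbert space, using <K(.,x),K(.,y)> = K(x,y). *)
Definition span_norm2 (s : span_elt) : C :=
  \sum_(p <- s) \sum_(q <- s) (p.2)^* * q.2 * K p.1 q.1.

Definition span_sub (s t : span_elt) : span_elt :=
  s ++ [seq (p.1, - p.2) | p <- t].

Definition span_cauchy (f : nat -> span_elt) : Prop :=
  forall e : R, 0 < e -> exists N : nat, forall m n : nat, (N <= m)%N -> (N <= n)%N ->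
    complex.Re (span_norm2 (span_sub (f m) (f n))) < e.

Definition span_pointwise (f : nat -> span_elt) (h : X -> C) : Prop :=
  forall z : X, forall e : R, 0 < e -> exists N : nat, forall n : nat, (N <= n)%N ->
    `|span_eval (f n) z - h z| < e%:C.

(** H(K): the completion of span{K(.,x)}, realized (as usual) as the
    functions on X that are pointwise limits of Cauchy sequences in the span. *)
Definition in_rkhs (h : X -> C) : Prop :=
  exists f : nat -> span_elt, span_cauchy f /\ span_pointwise f h.

Definition rkhs_norm2_is (h : X -> C) (r : R) : Prop :=
  exists f : nat -> span_elt, [/\ span_cauchy f, span_pointwise f h &
    (fun n => complex.Re (span_norm2 (f n))) @ \oo --> r].

End RKHS.

Definition delta {R : realType} {X : eqType} (x : X) : X -> R[i] :=
  fun z => if z == x then 1 else 0.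

Definition conjT {R : realType} {n : nat} (U : 'M[R[i]]_n) : 'M[R[i]]_n :=
  map_mx (fun z => z^*) U^T.

Definition unitary_mx {R : realType} {n : nat} (U : 'M[R[i]]_n) : Prop :=
  U *m conjT U = 1%:M /\ conjT U *m U = 1%:M.

Definition spectral_pos {R : realType} {n : nat} (M U : 'M[R[i]]_n) (d : 'I_n -> R) : Prop :=
  [/\ unitary_mx U, (forall i, 0 < d i) &
      M = U *m diag_mx (\row_i (d i)%:C) *m conjT U].

(** M^{-1/2} := U diag(d^{-1/2}) U^*, defined by the spectral theorem
    (chosen by classical description; 0 if M is not positive invertible). *)
Definition inv_sqrt_mx {R : realType} {n : nat} (M : 'M[R[i]]_n) : 'M[R[i]]_n :=
  epsilon (inhabits 0) (fun S => exists U d, spectral_pos M U d /\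
     S = U *m diag_mx (\row_i ((Num.sqrt (d i))^-1)%:C) *m conjT U).

Definition l2norm2 {R : realType} {n : nat} (v : 'cV[R[i]]_n) : R :=
  complex.Re (\sum_(i < n) `|v i 0| ^+ 2).

Definition fpt {X : choiceType} (F : {fset X}) (i : 'I_(size (enum_fset F))) : X :=
  tnth (in_tuple (enum_fset F)) i.

Definition kernel_mx {R : realType} {X : choiceType} (K : X -> X -> R[i]) (F : {fset X})
  : 'M[R[i]]_(size (enum_fset F)) :=
  \matrix_(i, j) K (fpt i) (fpt j).

Definition restr_vec {R : realType} {X : choiceType} (h : X -> R[i]) (F : {fset X})
  : 'cV[R[i]]_(size (enum_fset F)) :=
  \col_i h (fpt i).

Definition approx_norm2 {R : realType} {X : choiceType} (K : X -> X -> R[i])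
  (F : {fset X}) (h : X -> R[i]) : R :=
  l2norm2 (inv_sqrt_mx (kernel_mx K F) *m restr_vec h F).

(* For finite [F], let [g_F] be the element of the span of the
   [K(., x)], [x \in F], that interpolates [h] on [F]: its coefficients are
   [K_F^-1 h|_F], so [||g_F||^2 = <h|_F, K_F^-1 h|_F> = ||K_F^-1/2 h|_F||^2].
   For every [s] in the span supported in [F] and every [g] interpolating [h]
   on [F], [2 Re <s, h> - ||s||^2 <= ||g||^2], with equality at [s = g_F].
   Hence [g_F] is the orthogonal projection of [g_F'] when [F \subset F'], so
   the norms increase and [||g_F' - g_F||^2 = ||g_F'||^2 - ||g_F||^2]: bounded
   norms make [(g_(F_i))] a Cauchy sequence converging pointwise to [h].
   Conversely, if span elements [f_n] converge to [h], then
   [2 Re <s, h> - ||s||^2 = lim (||f_n||^2 - ||f_n - s||^2)], which bounds the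
   norms by [lim ||f_n||^2] and, for [s = f_N], also bounds them from below.
   [K_F] is invertible because [delta_x \in H(K)]: a null vector of [K_F] gives
   a span element orthogonal to everything, and pairing it with [delta_x]
   recovers its coefficients. *)

From HB Require Import structures.
From Stdlib Require Import ClassicalEpsilon.
From mathcomp Require Import all_boot all_order all_algebra.
From mathcomp Require Import finmap complex.
From mathcomp Require Import all_classical all_reals topology normedtype sequences.
From mathcomp Require Import sesquilinear spectral.
From mathcomp Require Import ring lra.
Import Order.TTheory GRing.Theory Num.Theory.
Import numFieldNormedType.Exports.
Set Implicit Arguments. Unset Strict Implicit. Unset Printing Implicit Defensive.
Local Open Scope classical_set_scope.
Local Open Scope complex_scope.
Local Open Scope ring_scope.

Section ComplexRe.
Variable R : realType.

Lemma Re_conj (z : R[i]) : complex.Re z^* = complex.Re z.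
Proof. by case: z. Qed.

Lemma Re_ge0 (z : R[i]) : 0 <= z -> 0 <= complex.Re z.
Proof. by case: z => a b; rewrite lecE /= => /andP[_]. Qed.

Lemma complex_gt0_real (z : R[i]) : 0 < z -> z = (complex.Re z)%:C /\ 0 < complex.Re z.
Proof. by case: z => a b; rewrite ltcE /= => /andP[/eqP -> ->]. Qed.

Lemma Re_natmul (n : nat) (z : R[i]) : complex.Re (n%:R * z) = n%:R * complex.Re z.
Proof. by rewrite mulr_natl raddfMn mulr_natl. Qed.

Lemma affine_ge0_slope0 (A x : R) : (forall l : R, 0 <= A + l * x) -> x = 0.
Proof.
move=> ge0; have [//|x_neq0] := eqVneq x 0.
by have := ge0 (- (A + 1) / x); rewrite divfK //; lra.
Qed.

End ComplexRe.

Section SpanForm.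
Variables (R : realType) (X : choiceType) (K : X -> X -> R[i]).
Local Notation span := (span_elt R X).

Definition span_dot (s t : span) : R[i] :=
  \sum_(p <- s) \sum_(q <- t) (p.2)^* * q.2 * K p.1 q.1.

Definition span_pair (h : X -> R[i]) (s : span) : R[i] :=
  \sum_(p <- s) (p.2)^* * h p.1.

Definition span_opp (s : span) : span := [seq (p.1, - p.2) | p <- s].

Definition span_scale (a : R[i]) (s : span) : span := [seq (p.1, a * p.2) | p <- s].

Definition span_sqnorm (s : span) : R := complex.Re (span_norm2 K s).

Definition span_supported (s : span) (E : {fset X}) : Prop :=
  forall p, p \in s -> p.1 \in E.

Definition span_interpolates (g : span) (h : X -> R[i]) (E : {fset X}) : Prop :=
  forall z, z \in E -> span_eval K g z = h z.

Lemma span_norm2E s : span_norm2 K s = span_dot s s.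
Proof. by []. Qed.

Lemma span_subE s t : span_sub s t = s ++ span_opp t.
Proof. by []. Qed.

Lemma span_dot_catl s1 s2 t : span_dot (s1 ++ s2) t = span_dot s1 t + span_dot s2 t.
Proof. by rewrite /span_dot big_cat. Qed.

Lemma span_dot_catr s t1 t2 : span_dot s (t1 ++ t2) = span_dot s t1 + span_dot s t2.
Proof. by rewrite /span_dot -big_split; apply: eq_bigr => p _; rewrite big_cat. Qed.

Lemma span_dot_oppl s t : span_dot (span_opp s) t = - span_dot s t.
Proof.
rewrite /span_dot big_map -sumrN; apply: eq_bigr => p _ /=; rewrite -sumrN.
by apply: eq_bigr => q _; rewrite rmorphN /= !mulNr.
Qed.

Lemma span_dot_oppr s t : span_dot s (span_opp t) = - span_dot s t.
Proof.
rewrite /span_dot -sumrN; apply: eq_bigr => p _ /=; rewrite big_map -sumrN.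
by apply: eq_bigr => q _ /=; rewrite mulrN !mulNr.
Qed.

Lemma span_dot_scalel a s t : span_dot (span_scale a s) t = a^* * span_dot s t.
Proof.
rewrite /span_dot big_map mulr_sumr; apply: eq_bigr => p _ /=; rewrite mulr_sumr.
by apply: eq_bigr => q _; rewrite rmorphM /= !mulrA.
Qed.

Lemma span_dot_scaler a s t : span_dot s (span_scale a t) = a * span_dot s t.
Proof.
rewrite /span_dot mulr_sumr; apply: eq_bigr => p _ /=; rewrite big_map mulr_sumr.
by apply: eq_bigr => q _ /=; ring.
Qed.

Lemma span_dot_pair s t : span_dot s t = span_pair (span_eval K t) s.
Proof.
apply: eq_bigr => p _; rewrite /span_eval mulr_sumr.
by apply: eq_bigr => q _; rewrite mulrA.
Qed.

Lemma span_norm2_sub s t :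
  span_norm2 K (span_sub s t) = span_dot s s - span_dot s t - span_dot t s + span_dot t t.
Proof.
rewrite span_norm2E span_subE span_dot_catl !span_dot_catr.
by rewrite !span_dot_oppl !span_dot_oppr opprK; ring.
Qed.

Hypothesis K_herm : forall x y, K y x = (K x y)^*.

Lemma span_dotC s t : span_dot t s = (span_dot s t)^*.
Proof.
rewrite /span_dot exchange_big rmorph_sum; apply: eq_bigr => p _ /=.
rewrite rmorph_sum; apply: eq_bigr => q _ /=.
by rewrite !rmorphM /= conjCK K_herm; congr (_ * _); apply: mulrC.
Qed.

Lemma Re_span_dotC s t : complex.Re (span_dot t s) = complex.Re (span_dot s t).
Proof. by rewrite span_dotC Re_conj. Qed.

Lemma span_sqnorm_sub s t :
  span_sqnorm (span_sub s t) = span_sqnorm s - 2 * complex.Re (span_dot s t) + span_sqnorm t.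
Proof.
rewrite /span_sqnorm span_norm2_sub !raddfD !raddfN /= Re_span_dotC !span_norm2E; lra.
Qed.

Lemma span_sqnorm_subC s t : span_sqnorm (span_sub s t) = span_sqnorm (span_sub t s).
Proof. by rewrite !span_sqnorm_sub Re_span_dotC; lra. Qed.

Lemma span_sqnorm_diff s t :
  span_sqnorm t - span_sqnorm (span_sub t s) = 2 * complex.Re (span_dot s t) - span_sqnorm s.
Proof. by rewrite span_sqnorm_sub Re_span_dotC; lra. Qed.

End SpanForm.

Section PosDefKernel.
Variables (R : realType) (X : choiceType) (K : X -> X -> R[i]).
Hypothesis K_psd : pos_def_kernel K.

Lemma pos_def_kernel_herm x y : K y x = (K x y)^*.
Proof.
have psd2 c1 c2 : 0 <= c1^* * c1 * K x x + c1^* * c2 * K x y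
                       + (c2^* * c1 * K y x + c2^* * c2 * K y y).
  have := K_psd (fun i : 'I_2 => if val i == 0%N then x else y)
                (fun i : 'I_2 => if val i == 0%N then c1 else c2).
  by rewrite !big_ord_recl !big_ord0 /= !addr0.
have := psd2 1 0; have := psd2 0 1; have := psd2 1 1; have := psd2 1 'i.
case: (K x x) => a1 a2; case: (K y y) => b1 b2.
case: (K x y) => u1 u2; case: (K y x) => v1 v2.
rewrite !lecE /= => /andP[/eqP h1 _] /andP[/eqP h2 _] /andP[/eqP h3 _] /andP[/eqP h4 _].
by congr (_ +i* _); lra.
Qed.

Let K_herm := pos_def_kernel_herm.

Lemma span_dot_ge0 s : 0 <= span_dot K s s.
Proof.
rewrite /span_dot big_tnth; under eq_bigr do rewrite big_tnth.
exact: (K_psd (fun i => (tnth (in_tuple s) i).1) (fun i => (tnth (in_tuple s) i).2)).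
Qed.

Lemma span_sqnorm_ge0 s : 0 <= span_sqnorm K s.
Proof. exact/Re_ge0/span_dot_ge0. Qed.

Lemma span_sqnorm_le_sub s t :
  span_sqnorm K s <= 2 * span_sqnorm K t + 2 * span_sqnorm K (span_sub s t).
Proof.
have sqnorm2 : span_sqnorm K (span_scale 2 t) = 2 * (2 * span_sqnorm K t).
  by rewrite /span_sqnorm !span_norm2E span_dot_scalel span_dot_scaler rmorph_nat !Re_natmul.
have := span_sqnorm_ge0 (span_sub s (span_scale 2 t)).
rewrite !span_sqnorm_sub // sqnorm2 span_dot_scaler Re_natmul; lra.
Qed.

(* If [span_dot K t s] were nonzero, [t ++ span_scale a s] would have negative
   norm for a suitable scalar [a]. *)
Lemma span_dot_null s : span_dot K s s = 0 -> forall t, span_dot K t s = 0.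
Proof.
move=> s0 t.
have ge0 a : 0 <= complex.Re (span_dot K t t)
                  + complex.Re (a * span_dot K t s + (a * span_dot K t s)^*).
  have := Re_ge0 (span_dot_ge0 (t ++ span_scale a s)).
  rewrite !span_dot_catl !span_dot_catr !span_dot_scalel !span_dot_scaler s0 !mulr0 addr0.
  by rewrite (span_dotC K_herm t s) -rmorphM -addrA raddfD.
move: ge0; case: (span_dot K t s) => x y ge0.
have x0 : 2 * x = 0.
  apply: (@affine_ge0_slope0 _ (complex.Re (span_dot K t t))) => l.
  by have := ge0 l%:C; rewrite /= !mul0r !subr0; lra.
have y0 : 2 * y = 0.
  apply: (@affine_ge0_slope0 _ (complex.Re (span_dot K t t))) => l.
  by have := ge0 ((- l)%:C * 'i); rewrite /= !mul0r; lra.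
by congr (_ +i* _); lra.
Qed.

End PosDefKernel.

(* [R[i]] gets its normed topology only through its [numFieldType] structure. *)
Definition complexNF (R : realType) : numFieldType := R[i].

Section SpanLimits.
Variables (R : realType) (X : choiceType) (K : X -> X -> R[i]).
Local Notation C := (complexNF R).

Lemma span_pointwise_cvg f h z : span_pointwise K f h ->
  (fun n => span_eval K (f n) z : C) @ \oo --> (h z : C).
Proof.
move=> fh; apply/cvgrPdist_lt => e e_gt0.
have [-> e'_gt0] := complex_gt0_real e_gt0.
have [N fhN] := fh z _ e'_gt0.
near=> n; rewrite distrC; apply: fhN.
by near: n; exact: nbhs_infty_ge.
Unshelve. all: by end_near.
Qed.

Lemma cvg_Re (u : nat -> C) (l : C) :
  u @ \oo --> l -> (fun n => complex.Re (u n)) @ \oo --> complex.Re l.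
Proof.
move=> ul; apply/cvgrPdist_lt => e e_gt0.
move/cvgrPdist_lt: ul => /(_ e%:C); rewrite ltcR => /(_ e_gt0).
apply: filterS => n; rewrite -raddfB /=.
move: (l - u n) => z; rewrite normc_def ltcR; apply: le_lt_trans.
case: z => a b /=; rewrite -sqrtr_sqr; apply: ler_wsqrtr.
by rewrite lerDl sqr_ge0.
Qed.

Lemma span_dot_cvg f h s : span_pointwise K f h ->
  (fun n => span_dot K s (f n) : C) @ \oo --> (span_pair h s : C).
Proof.
move=> fh; rewrite (_ : (fun n => _) =
  fun n => \sum_(p <- s) (p.2)^* * span_eval K (f n) p.1 :> C); last first.
  by apply: funext => n; rewrite span_dot_pair.
apply: cvg_big => [|p _]; first exact: add_continuous.
apply: (@cvgM _ _ _ _ (fun=> (p.2)^* : C) (fun n => span_eval K (f n) p.1 : C)).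
  exact: cvg_cst.
exact: span_pointwise_cvg.
Qed.

Hypothesis K_psd : pos_def_kernel K.

Lemma span_pair_delta_null (x : X) s :
  in_rkhs K (delta x) -> span_dot K s s = 0 -> span_pair (delta x) s = 0.
Proof.
case=> f [_ fx] s0; have := span_dot_cvg (s := s) fx.
rewrite (_ : (fun n => _) = fun _ => 0 :> C); last first.
  apply: funext => n.
  by rewrite (span_dotC (pos_def_kernel_herm K_psd)) span_dot_null // rmorph0.
by move/(cvg_lim (@norm_hausdorff _ _)); rewrite lim_cst.
Qed.

End SpanLimits.

Section KernelMatrix.
Variables (R : realType) (X : choiceType) (K : X -> X -> R[i]) (F : {fset X}).
Local Notation n := (size (enum_fset F)).

Lemma fpt_inj : injective (@fpt X F).
Proof. exact/tuple_uniqP/fset_uniq. Qed.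

Lemma fpt_mem (j : 'I_n) : fpt j \in F.
Proof. exact: mem_tnth. Qed.

Lemma fpt_onto z : z \in F -> exists j : 'I_n, fpt j = z.
Proof.
move=> zF; have zn : (index z (enum_fset F) < n)%N by rewrite index_mem.
by exists (Ordinal zn); rewrite /fpt (tnth_nth z) /= nth_index.
Qed.

Hypothesis K_psd : pos_def_kernel K.

Lemma kernel_mx_psd : pos_def_kernel (kernel_mx K F).
Proof.
move=> m x c; under eq_bigr do under eq_bigr do rewrite mxE.
exact: K_psd (fun i => fpt (x i)) c.
Qed.

(* A null vector [v] of [K_F] yields a null element of the span, whose pairing
   with [delta (fpt a)] is the coefficient [v a]. *)
Lemma kernel_mx_unit : (forall x, in_rkhs K (delta x)) -> kernel_mx K F \in unitmx.
Proof.
move=> deltaK; rewrite unitmxE unitfE; apply/negP => /det0P [v v_neq0 vM].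
pose s : span_elt R X := [seq (fpt a, (v 0 a)^*) | a <- index_enum 'I_n].
have eval_s (b : 'I_n) : span_eval K s (fpt b) = 0.
  have : (v *m kernel_mx K F) 0 b = 0 by rewrite vM mxE.
  rewrite mxE => /(congr1 (@conjc _)); rewrite rmorph_sum rmorph0 => <-.
  rewrite /span_eval big_map; apply: eq_bigr => a _ /=.
  by rewrite mxE rmorphM /= (pos_def_kernel_herm K_psd (fpt a)).
have s0 : span_dot K s s = 0.
  by rewrite span_dot_pair /span_pair big_map big1 // => a _; rewrite eval_s mulr0.
move/eqP: v_neq0; apply; apply/rowP => a; rewrite mxE.
have := span_pair_delta_null K_psd (deltaK (fpt a)) s0.
rewrite /span_pair big_map (bigD1 a) //= big1 ?addr0 => [|b ba].
  by rewrite /delta eqxx mulr1 conjCK.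
by rewrite /delta (inj_eq fpt_inj) (negbTE ba) mulr0.
Qed.

End KernelMatrix.

Section ConjTranspose.
Local Open Scope sesquilinear_scope.
Variable R : realType.

Lemma conjTE m (A : 'M[R[i]]_m) : conjT A = A ^t*.
Proof. by []. Qed.

Lemma conjT_mul m (A B : 'M[R[i]]_m) : conjT (A *m B) = conjT B *m conjT A.
Proof. by rewrite !conjTE trmx_mul map_mxM. Qed.

Lemma conjTK m (A : 'M[R[i]]_m) : conjT (conjT A) = A.
Proof. by rewrite !conjTE trmxCK. Qed.

Lemma conjT_diag_real m (r : 'I_m -> R) :
  conjT (diag_mx (\row_i (r i)%:C)) = diag_mx (\row_i (r i)%:C).
Proof.
apply/matrixP => a b; rewrite !mxE.
case: (eqVneq a b) => [->|_]; first by rewrite !mulr1n conjc_real.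
by rewrite !mulr0n rmorph0.
Qed.

End ConjTranspose.

Section PosDefMatrix.
Local Open Scope sesquilinear_scope.
Variables (R : realType) (n : nat) (M : 'M[R[i]]_n).
Hypotheses (M_psd : pos_def_kernel M) (M_unit : M \in unitmx).
Local Notation P := (spectralmx M).
Local Notation D := (spectral_diag M).

Lemma psd_hermsymmx : M \is hermsymmx.
Proof.
apply/is_hermitianmxP; rewrite expr0 scale1r; apply/matrixP => a b.
by rewrite !mxE (pos_def_kernel_herm M_psd).
Qed.

Lemma psd_spectral_decomp : M = P ^t* *m diag_mx D *m P.
Proof.
rewrite -invmx_unitary ?spectral_unitarymx //.
exact/orthomx_spectralP/hermitian_normalmx/psd_hermsymmx.
Qed.

Lemma spectral_diag_gt0 k : 0 < D 0 k.
Proof.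
have PMP : P *m M *m P ^t* = diag_mx D.
  rewrite [X in P *m X *m _]psd_spectral_decomp -invmx_unitary ?spectral_unitarymx //.
  rewrite !mulmxA mulmxV ?spectral_unit // mul1mx.
  by rewrite -mulmxA mulmxV ?spectral_unit // mulmx1.
have D_ge0 : 0 <= D 0 k.
  have := congr1 (fun A : 'M_n => A k k) PMP.
  rewrite [diag_mx D k k]mxE eqxx mulr1n => <-.
  have := M_psd id (fun a => (P k a)^*).
  congr (_ <= _); rewrite mxE exchange_big; apply: eq_bigr => j _ /=.
  rewrite mxE mulr_suml; apply: eq_bigr => i _; rewrite !mxE.
  by rewrite conjCK mulrAC.
rewrite lt0r D_ge0 andbT; apply: contraTneq M_unit => Dk0.
rewrite unitmxE unitfE [X in \det X]psd_spectral_decomp !det_mulmx det_diag.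
by rewrite (bigD1 k) //= Dk0 mul0r mulr0 mul0r eqxx.
Qed.

Lemma psd_spectral_pos : exists U d, spectral_pos M U d.
Proof.
have D_real k : D 0 k = (complex.Re (D 0 k))%:C.
  by case: (complex_gt0_real (spectral_diag_gt0 k)).
exists (P ^t*), (fun k => complex.Re (D 0 k)); split.
- rewrite /unitary_mx conjTE trmxCK; split; last exact/unitarymxP/spectral_unitarymx.
  by rewrite -invmx_unitary ?spectral_unitarymx // mulVmx // spectral_unit.
- by move=> k; case: (complex_gt0_real (spectral_diag_gt0 k)).
- rewrite conjTE trmxCK {1}psd_spectral_decomp; congr (_ *m diag_mx _ *m _).
  by apply/rowP => k; rewrite mxE -D_real.
Qed.

Lemma inv_sqrt_mx_spec : exists U d, spectral_pos M U d /\
  inv_sqrt_mx M = U *m diag_mx (\row_i ((Num.sqrt (d i))^-1)%:C) *m conjT U.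
Proof.
rewrite /inv_sqrt_mx; apply: (epsilon_spec (inhabits 0)
  (fun S => exists U d, spectral_pos M U d /\ S = _)).
have [U [d Ud]] := psd_spectral_pos.
by exists (U *m diag_mx (\row_i ((Num.sqrt (d i))^-1)%:C) *m conjT U), U, d.
Qed.

Lemma conjT_inv_sqrt_mx : conjT (inv_sqrt_mx M) = inv_sqrt_mx M.
Proof.
have [U [d [_ ->]]] := inv_sqrt_mx_spec.
by rewrite !conjT_mul conjTK conjT_diag_real mulmxA.
Qed.

Lemma inv_sqrt_mxM : inv_sqrt_mx M *m inv_sqrt_mx M = invmx M.
Proof.
have [U [d [[[UU UU'] d_gt0 M_def] ->]]] := inv_sqrt_mx_spec.
set Q := diag_mx (\row_i ((Num.sqrt (d i))^-1)%:C).
have QDQ : diag_mx (\row_i (d i)%:C) *m (Q *m Q) = 1%:M.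
  rewrite !mulmx_diag -diag_const_mx; congr diag_mx; apply/rowP => k; rewrite !mxE.
  by rewrite -!rmorphM /= -expr2 exprVn sqr_sqrtr ?ltW // mulfV ?lt0r_neq0.
have MSS : M *m (U *m Q *m conjT U *m (U *m Q *m conjT U)) = 1%:M.
  rewrite M_def !mulmxA -[_ *m conjT U *m U]mulmxA UU' mulmx1.
  rewrite -[_ *m conjT U *m U]mulmxA UU' mulmx1 -!mulmxA [Q *m (Q *m _)]mulmxA.
  by rewrite [diag_mx _ *m (Q *m Q *m _)]mulmxA QDQ mul1mx UU.
by rewrite -[LHS](mulKmx M_unit) MSS mulmx1.
Qed.

Lemma l2norm2_inv_sqrt_mx (v : 'cV_n) :
  l2norm2 (inv_sqrt_mx M *m v) = complex.Re (\sum_k (v k 0)^* * (invmx M *m v) k 0).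
Proof.
rewrite /l2norm2; congr complex.Re; set S := inv_sqrt_mx M.
have -> : \sum_k `|(S *m v) k 0| ^+ 2 = ((S *m v)^t* *m (S *m v)) 0 0.
  by rewrite mxE; apply: eq_bigr => k _; rewrite normCK mulrC !mxE.
rewrite trmx_mul map_mxM -conjTE conjT_inv_sqrt_mx mulmxA -[_ *m S *m S]mulmxA.
by rewrite inv_sqrt_mxM -mulmxA mxE; apply: eq_bigr => k _; rewrite !mxE.
Qed.

End PosDefMatrix.

Section KernelInterpolant.
Variables (R : realType) (X : choiceType) (K : X -> X -> R[i]).
Variables (F : {fset X}) (h : X -> R[i]).
Local Notation n := (size (enum_fset F)).
Local Notation coef := (invmx (kernel_mx K F) *m restr_vec h F).

Definition kernel_interp : span_elt R X := [seq (fpt k, coef k 0) | k <- index_enum 'I_n].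

Lemma kernel_interp_supported : span_supported kernel_interp F.
Proof. by move=> _ /mapP[k _ ->]; exact: fpt_mem. Qed.

Hypothesis KF_unit : kernel_mx K F \in unitmx.

Lemma kernel_interp_eval (j : 'I_n) : span_eval K kernel_interp (fpt j) = h (fpt j).
Proof.
have : (kernel_mx K F *m coef) j 0 = restr_vec h F j 0 by rewrite mulKVmx.
rewrite !mxE => <-; rewrite /span_eval big_map.
by apply: eq_bigr => k _; rewrite !mxE mulrC.
Qed.

Lemma kernel_interp_interpolates : span_interpolates K kernel_interp h F.
Proof. by move=> z /fpt_onto[j <-]; exact: kernel_interp_eval. Qed.

Hypothesis K_psd : pos_def_kernel K.

Lemma span_sqnorm_kernel_interp : span_sqnorm K kernel_interp = approx_norm2 K F h.
Proof.
rewrite /approx_norm2 l2norm2_inv_sqrt_mx //; last exact: kernel_mx_psd.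
rewrite /span_sqnorm span_norm2E span_dot_pair /span_pair big_map -Re_conj rmorph_sum.
congr complex.Re; apply: eq_bigr => k _ /=.
by rewrite kernel_interp_eval rmorphM /= conjCK /restr_vec mxE mulrC.
Qed.

End KernelInterpolant.

Section Variational.
Variables (R : realType) (X : choiceType) (K : X -> X -> R[i]).
Hypothesis K_psd : pos_def_kernel K.
Let K_herm := pos_def_kernel_herm K_psd.
Variables (h : X -> R[i]) (E : {fset X}) (g : span_elt R X).
Hypothesis g_interp : span_interpolates K g h E.

Lemma span_dot_interp s : span_supported s E -> span_dot K s g = span_pair h s.
Proof.
by move=> sE; rewrite span_dot_pair; apply: eq_big_seq => p /sE pE; rewrite g_interp.
Qed.

Lemma interp_sqnorm_ge s : span_supported s E ->
  2 * complex.Re (span_pair h s) - span_sqnorm K s <= span_sqnorm K g.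
Proof.
move=> sE; have := span_sqnorm_ge0 K_psd (span_sub g s).
by rewrite span_sqnorm_sub // (Re_span_dotC K_herm) span_dot_interp //; lra.
Qed.

Hypothesis g_supp : span_supported g E.

Lemma interp_sqnorm : span_sqnorm K g = complex.Re (span_pair h g).
Proof. by rewrite /span_sqnorm span_norm2E span_dot_interp. Qed.

End Variational.

(* Pythagoras: an interpolant on a smaller set is the orthogonal projection of
   one on a larger set. *)
Lemma interp_sqnorm_sub (R : realType) (X : choiceType) (K : X -> X -> R[i])
    (h : X -> R[i]) (E E' : {fset X}) (g g' : span_elt R X) :
  pos_def_kernel K -> (E `<=` E')%fset ->
  span_interpolates K g h E -> span_supported g E -> span_interpolates K g' h E' ->
  span_sqnorm K (span_sub g g') = span_sqnorm K g' - span_sqnorm K g.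
Proof.
move=> K_psd EE' g_interp g_supp g'_interp.
have gE' : span_supported g E' by move=> p /g_supp/(fsubsetP EE').
rewrite span_sqnorm_sub; last exact: pos_def_kernel_herm.
rewrite (span_dot_interp g'_interp gE') -(interp_sqnorm g_interp g_supp); lra.
Qed.

Section SpanApproximation.
Variables (R : realType) (X : choiceType) (K : X -> X -> R[i]).
Hypothesis K_psd : pos_def_kernel K.
Variables (f : nat -> span_elt R X) (h : X -> R[i]).
Hypothesis fh : span_pointwise K f h.

Lemma span_sqnorm_diff_cvg s :
  (fun m => span_sqnorm K (f m) - span_sqnorm K (span_sub (f m) s)) @ \oo -->
  2 * complex.Re (span_pair h s) - span_sqnorm K s.
Proof.
rewrite (_ : (fun m => _) =
  (fun m => 2 * complex.Re (span_dot K s (f m))) - (fun=> span_sqnorm K s)); last first.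
  by apply: funext => m; rewrite span_sqnorm_diff //; exact: pos_def_kernel_herm.
apply: cvgB (cvg_cst _); apply: cvgMl_tmp.
exact: cvg_Re (span_dot_cvg (s := s) fh).
Qed.

Variables (E : {fset X}) (g : span_elt R X).
Hypothesis g_interp : span_interpolates K g h E.

Lemma lim_le_interp_sqnorm s (u : nat -> R) l : span_supported s E -> u @ \oo --> l ->
  (\forall m \near \oo, u m <= span_sqnorm K (f m) - span_sqnorm K (span_sub (f m) s)) ->
  l <= span_sqnorm K g.
Proof.
move=> sE ul uf; apply: le_trans _ (interp_sqnorm_ge K_psd g_interp sE).
exact: ler_cvg_to ul (span_sqnorm_diff_cvg (s := s)) uf.
Qed.

Lemma interp_sqnorm_le_lim (u : nat -> R) l : span_supported g E -> u @ \oo --> l ->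
  (\forall m \near \oo, span_sqnorm K (f m) <= u m) -> span_sqnorm K g <= l.
Proof.
move=> g_supp ul fu.
have -> : span_sqnorm K g = 2 * complex.Re (span_pair h g) - span_sqnorm K g.
  by have := interp_sqnorm g_interp g_supp; lra.
apply: ler_cvg_to (span_sqnorm_diff_cvg (s := g)) ul _.
apply: filterS fu => m fum; have := span_sqnorm_ge0 K_psd (span_sub (f m) g); lra.
Qed.

End SpanApproximation.

Section ApproxNorm.
Variables (R : realType) (X : choiceType) (K : X -> X -> R[i]).
Hypotheses (K_psd : pos_def_kernel K) (deltaK : forall x, in_rkhs K (delta x)).
Variable F : nat -> {fset X}.
Hypotheses (F_incr : forall i, (F i `<=` F i.+1)%fset)
           (F_cover : forall x, exists i, x \in F i).
Variable h : X -> R[i].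
Local Notation a i := (approx_norm2 K (F i) h).
Local Notation g i := (kernel_interp K (F i) h).

Lemma F_homo : {homo F : i j / (i <= j)%N >-> (i `<=` j)%fset}.
Proof.
apply: (@homo_leq _ F (fun A B => A `<=` B)%fset) F_incr => [A|B A C].
  exact: fsubset_refl.
exact: fsubset_trans.
Qed.

Lemma span_supported_cover (s : span_elt R X) : exists i, span_supported s (F i).
Proof.
elim: s => [|q s [i si]]; first by exists 0%N.
have [j qj] := F_cover q.1; exists (maxn i j) => p; rewrite inE => /orP[/eqP -> | ps].
  exact: fsubsetP (F_homo (leq_maxr i j)) _ qj.
exact: fsubsetP (F_homo (leq_maxl i j)) _ (si p ps).
Qed.

Let g_supp i : span_supported (g i) (F i).
Proof. exact: kernel_interp_supported. Qed.

Let g_interp i : span_interpolates K (g i) h (F i).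
Proof. exact/kernel_interp_interpolates/kernel_mx_unit. Qed.

Let g_sqnorm i : span_sqnorm K (g i) = a i.
Proof. exact/span_sqnorm_kernel_interp/K_psd/kernel_mx_unit. Qed.

Lemma sqnorm_sub_kernel_interp m n : (m <= n)%N ->
  span_sqnorm K (span_sub (g m) (g n)) = a n - a m.
Proof.
move=> mn; rewrite -!g_sqnorm.
exact: interp_sqnorm_sub K_psd (F_homo mn) (@g_interp m) (@g_supp m) (@g_interp n).
Qed.

Lemma approx_norm2_homo : {homo (fun i => a i) : m n / (m <= n)%N >-> m <= n}.
Proof.
move=> m n mn; rewrite -subr_ge0 -sqnorm_sub_kernel_interp //.
exact: span_sqnorm_ge0.
Qed.

Lemma approx_norm2_le_lim f (u : nat -> R) l i : span_pointwise K f h ->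
  u @ \oo --> l -> (\forall m \near \oo, span_sqnorm K (f m) <= u m) -> a i <= l.
Proof.
move=> fh ul fu; rewrite -g_sqnorm.
exact: (interp_sqnorm_le_lim (u := u) K_psd fh (@g_interp i) (@g_supp i) ul fu).
Qed.

Lemma approx_norm2_bounded : in_rkhs K h -> exists M, forall i, a i <= M.
Proof.
case=> f [f_cauchy fh]; have [N fN] := f_cauchy 1 ltr01.
exists (2 * span_sqnorm K (f N) + 2) => i.
apply: (approx_norm2_le_lim _ fh (cvg_cst _)); near=> m.
have : span_sqnorm K (span_sub (f m) (f N)) < 1.
  by apply: fN => //; near: m; exact: nbhs_infty_ge.
have := span_sqnorm_le_sub K_psd (f m) (f N); lra.
Unshelve. all: by end_near.
Qed.

Lemma approx_norm2_cvg r : rkhs_norm2_is K h r -> (fun i => a i) @ \oo --> r.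
Proof.
case=> f [f_cauchy fh fr].
have a_le_r i : a i <= r by apply: (approx_norm2_le_lim _ fh fr); apply: nearW.
have r_le_a e : 0 < e -> exists i, r - e <= a i.
  move=> e_gt0; have [N fN] := f_cauchy e e_gt0.
  have [i fNi] := span_supported_cover (f N); exists i; rewrite -g_sqnorm.
  apply: (lim_le_interp_sqnorm K_psd fh (@g_interp i) fNi (cvgB fr (cvg_cst e))).
  near=> m; have : span_sqnorm K (span_sub (f m) (f N)) < e.
    by apply: fN => //; near: m; exact: nbhs_infty_ge.
  by rewrite !fctE -/(span_sqnorm K (f m)); lra.
apply/cvgrPdist_le => e e_gt0; have [i rai] := r_le_a e e_gt0.
near=> n; have ain : a i <= a n.
  by apply: approx_norm2_homo; near: n; exact: nbhs_infty_ge.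
have := a_le_r n; rewrite ler_norml => anr; apply/andP; split; lra.
Unshelve. all: by end_near.
Qed.

Lemma approx_norm2_bounded_rkhs : (exists M, forall i, a i <= M) -> in_rkhs K h.
Proof.
case=> M aM; exists (fun i => g i); split; last first.
  move=> z e e_gt0; have [i zi] := F_cover z; exists i => n ni.
  by rewrite g_interp ?subrr ?normr0 ?ltcR // (fsubsetP (F_homo ni)).
have a_cvg : (fun i => a i) @ \oo --> sup (range (fun i => a i)).
  apply: nondecreasing_cvgn; first exact: approx_norm2_homo.
  by exists M => _ [i _ <-]; exact: aM.
move=> e e_gt0; have e2_gt0 : 0 < e / 2 by rewrite divr_gt0.
move/cvgrPdist_lt: a_cvg => /(_ _ e2_gt0) [N _ aN].
exists N => m n Nm Nn; rewrite -/(span_sqnorm K _).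
wlog mn : m n Nm Nn / (m <= n)%N => [sym|].
  have [|nm] := leqP m n; first exact: sym.
  rewrite span_sqnorm_subC; last exact: pos_def_kernel_herm.
  exact/sym/ltnW.
rewrite sqnorm_sub_kernel_interp //.
by move: (aN m Nm) (aN n Nn); rewrite /= !ltr_norml => /andP[? ?] /andP[? ?]; lra.
Qed.

End ApproxNorm.

Theorem corollary8p8 (R : realType) (X : countType) (K : X -> X -> R[i])
  (F : nat -> {fset X}) :
  pos_def_kernel K ->
  (forall x : X, in_rkhs K (delta x)) ->
  (forall i : nat, (F i `<=` F i.+1)%fset) ->
  (forall x : X, exists i : nat, x \in F i) ->
  forall h : X -> R[i],
    (in_rkhs K h <-> exists M : R, forall i : nat, approx_norm2 K (F i) h <= M) /\
    (in_rkhs K h ->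
       {homo (fun i => approx_norm2 K (F i) h) : m n / (m <= n)%N >-> m <= n} /\
       forall r : R, rkhs_norm2_is K h r ->
         (fun i => approx_norm2 K (F i) h) @ \oo --> r).
Proof.
move=> K_psd deltaK F_incr F_cover h; split.
  split; first exact: approx_norm2_bounded.
  exact: approx_norm2_bounded_rkhs.
split=> [|r]; first exact: approx_norm2_homo.
exact: approx_norm2_cvg.
Qed.
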